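(* Let $\Bbbk$ be a field of characteristic zero. The centreless BCCA satisfies $\mathfrak b=\mathrm{span}\{u_n,v_m\mid n\ge1,\ m\ge0\}$ (this is a basis), and the bracket in this basis is $$[u_n,u_m]=(n-m)(u_{n+m}-4u_{n+m-2}),\quad [u_n,v_m]=(n-m)v_{n+m}-4(n-m-1)v_{n+m-2},\quad [v_n,v_m]=0$$ for all $n,m$ in the respective ranges ($n,m\ge1$ for $u$, $n,m\ge0$ for $v$).
   Context: $\mathcal W=\Bbbk[t,t^{-1}]\partial$ is the Witt algebra with $L_n=-t^{n+1}\partial$; $I(0,-1)=t\Bbbk[t,t^{-1}]dt^{-1}$ with $\mathcal W$-action $f\partial\cdot(g\,dt^{-1})=(fg'-f'g)dt^{-1}$ and basis $M_n=-t^{n+1}dt^{-1}$. The centreless BCCA is $\mathfrak b=\mathcal O\ltimes\mathcal P\subseteq\mathcal W\ltimes I(0,-1)$ (with $I(0,-1)$ abelian), where $\mathcal O=\mathrm{span}\{L_n-L_{-n}\mid n\ge1\}$ and $\mathcal P=\mathrm{span}\{M_n+M_{-n}\mid n\ge0\}$. Define $u_n=-(t+t^{-1})^{n-1}(t^2-1)\partial$ ($n\ge1$) and $v_n=-(t+t^{-1})^n\,t\,dt^{-1}$ ($n\ge0$). *)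

From HB Require Import structures.
From mathcomp Require Import all_boot all_order all_algebra.
Set Implicit Arguments. Unset Strict Implicit. Unset Printing Implicit Defensive.
Import Order.TTheory GRing.Theory Num.Theory.
Local Open Scope ring_scope.
Local Open Scope quotient_scope.

Section BCCA.
Variable K : fieldType.

(* Ambient field k(t); Laurent polynomials k[t,t^-1] form a subring of it. *)
Definition Fr := {fraction {poly K}}.
Local Notation tofrac := (@FracField.tofrac {poly K}).
Local Notation "x %:F" := (tofrac x).

Definition tt_ : Fr := ('X : {poly K})%:F.

Definition cst (c : K) : Fr := (c%:P)%:F.

(* d/dt on k(t), defined by the quotient rule on a representative n/d
   (it is independent of the representative). *)
Definition fderiv (x : Fr) : Fr :=
  let r := repr x in
  ((\n_r)^`() * \d_r - \n_r * (\d_r)^`())%:F / ((\d_r) ^+ 2)%:F.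

(* An element f d/dt + g dt^{-1} of the ambient Lie algebra is the pair (f, g). *)
Definition V := (Fr * Fr)%type.

Definition vadd (x y : V) : V := (x.1 + y.1, x.2 + y.2).
Definition vzero : V := (0, 0).
Definition vscale (c : K) (x : V) : V := (cst c * x.1, cst c * x.2).
Definition vsub (x y : V) : V := vadd x (vscale (-1) y).

(* Bracket of W |x I(0,-1), with I(0,-1) abelian:
   [f d + a, g d + b] = (f g' - f' g) d + (f.b - g.a),
   where f d . (h dt^-1) = (f h' - f' h) dt^-1. *)
Definition act (f h : Fr) : Fr := f * fderiv h - fderiv f * h.
Definition lie (x y : V) : V := (act x.1 y.1, act x.1 y.2 - act y.1 x.2).

Definition Lw (n : int) : V := (- (tt_ ^ (n + 1)), 0).
Definition Mi (n : int) : V := (0, - (tt_ ^ (n + 1))).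

(* u_n = -(t+t^{-1})^{n-1}(t^2-1) d  (used for n >= 1),
   v_n = -(t+t^{-1})^n t dt^{-1}      (n >= 0) *)
Definition u (n : nat) : V :=
  (- ((tt_ + tt_^-1) ^+ (n.-1) * (tt_ ^+ 2 - 1)), 0).
Definition v (n : nat) : V := (0, - ((tt_ + tt_^-1) ^+ n * tt_)).

Definition lincomb (I : Type) (F : I -> V) (c : I -> K) (s : seq I) : V :=
  foldr (fun i acc => vadd (vscale (c i) (F i)) acc) vzero s.

Definition in_span (I : eqType) (F : I -> V) (P : I -> Prop) (x : V) : Prop :=
  exists (s : seq I) (c : I -> K), (forall i, i \in s -> P i) /\ x = lincomb F c s.

Definition lin_indep (I : eqType) (F : I -> V) (P : I -> Prop) : Prop :=
  forall (s : seq I) (c : I -> K), uniq s -> (forall i, i \in s -> P i) ->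
    lincomb F c s = vzero -> forall i, i \in s -> c i = 0.

(* generators of b = O |x P :  L_n - L_{-n} (n >= 1) and M_n + M_{-n} (n >= 0) *)
Definition bgen (i : nat + nat) : V :=
  match i with
  | inl n => vsub (Lw n%:Z) (Lw (- n%:Z))
  | inr n => vadd (Mi n%:Z) (Mi (- n%:Z))
  end.
Definition bgen_dom (i : nat + nat) : Prop :=
  match i with inl n => (1 <= n)%N | inr _ => True end.

Definition in_b (x : V) : Prop := in_span bgen bgen_dom x.

Definition uv (i : nat + nat) : V :=
  match i with inl n => u n | inr m => v m end.
Definition uv_dom (i : nat + nat) : Prop :=
  match i with inl n => (1 <= n)%N | inr _ => True end.

End BCCA.

From HB Require Import structures.
From mathcomp Require Import all_boot all_order all_algebra.
From mathcomp Require Import ring zify.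
Set Implicit Arguments.
Unset Strict Implicit.
Unset Printing Implicit Defensive.
Import GRing.Theory.
Local Open Scope ring_scope.

(* Write s = t + t^-1 and w = t^2 - 1.  Multiplication by s shifts Laurent
   monomials, s t^n = t^(n+1) + t^(n-1), so the generators L_n - L_-n and
   M_n + M_-n of b satisfy the Chebyshev recurrence f_(n+1) = s f_n - f_(n-1),
   while u_(n+1) = s u_n and v_(n+1) = s v_n.  Since u_1 = L_1 - L_-1 and
   2 v_0 = M_0 + M_0, both families span the smallest subspace containing u_1
   and v_0 and stable under multiplication by s.  Linear independence reduces to
   s being transcendental over k: its derivative 1 - t^-2 is nonzero, whereas in
   characteristic zero an element algebraic over the constants of a derivation
   has derivative zero (differentiate a minimal polynomial).  The brackets are
   Wronskians f g' - f' g; they follow from (s^a)' = a s^(a-1) s', the identity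
   w s' = s^2 - 4 and the Wronskian w t' - w' t = - s t. *)

Lemma deriv_eq0_pchar0 (R : idomainType) (p : {poly R}) :
  [pchar R] =i pred0 -> p^`() = 0 -> p = (p`_0)%:P.
Proof.
move=> R0 p'0; apply/polyP => -[|i]; rewrite coefC //=.
have /eqP := congr1 (fun q : {poly R} => q`_i) p'0.
by rewrite coef_deriv coef0 -mulr_natr mulf_eq0 ((pcharf0P R).1 R0) orbF => /eqP.
Qed.

Lemma sum_scaleXn_eq0 (R : nzRingType) (J : eqType) (r : seq J) (e : J -> nat)
    (a : J -> R) :
  uniq r -> {in r &, injective e} -> \sum_(j <- r) a j *: 'X^(e j) = 0 ->
  {in r, forall j, a j = 0}.
Proof.
move=> r_uniq e_inj sum0 j jr.
have := congr1 (fun p : {poly R} => p`_(e j)) sum0; rewrite coef_sumMXn coef0 => <-.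
rewrite -big_filter (@eq_in_filter _ _ (pred1 j)) ?filter_pred1_uniq ?big_seq1 // => i ir /=.
by apply/eqP/eqP => [/(e_inj _ _ ir jr)|->].
Qed.

Section SumIndex.
Variables A B : eqType.

Definition lefts (r : seq (A + B)%type) :=
  pmap (fun i => if i is inl a then Some a else None) r.
Definition rights (r : seq (A + B)%type) :=
  pmap (fun i => if i is inr b then Some b else None) r.

Lemma mem_lefts r a : (a \in lefts r) = (inl a \in r).
Proof. by elim: r => //= -[a'|b] r IHr; rewrite !inE IHr. Qed.

Lemma mem_rights r b : (b \in rights r) = (inr b \in r).
Proof. by elim: r => //= -[a|b'] r IHr; rewrite !inE IHr. Qed.

Lemma lefts_uniq r : uniq r -> uniq (lefts r).
Proof. by apply: (@pmap_uniq _ _ _ inl); case. Qed.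

Lemma rights_uniq r : uniq r -> uniq (rights r).
Proof. by apply: (@pmap_uniq _ _ _ inr); case. Qed.

Lemma big_lefts_rights (M : nmodType) r (f : (A + B)%type -> M) :
  \sum_(i <- r) f i = \sum_(a <- lefts r) f (inl a) + \sum_(b <- rights r) f (inr b).
Proof.
elim: r => [|[a|b] r IHr]; first by rewrite !big_nil addr0.
  by rewrite /= !big_cons IHr addrA.
by rewrite /= !big_cons IHr addrCA.
Qed.

End SumIndex.

(** * Derivations and Wronskians *)

Section Derivation.
Variables (F : fieldType) (D : F -> F).
Hypothesis D_add : forall x y, D (x + y) = D x + D y.
Hypothesis D_mul : forall x y, D (x * y) = x * D y + D x * y.

Lemma derivation0 : D 0 = 0.
Proof. by apply: (addrI (D 0)); rewrite -D_add !addr0. Qed.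

Lemma derivation1 : D 1 = 0.
Proof.
have := D_mul 1 1; rewrite !mulr1 !mul1r => D1.
by apply: (addrI (D 1)); rewrite addr0 -D1.
Qed.

Lemma derivationN x : D (- x) = - D x.
Proof. by apply: (addrI (D x)); rewrite -D_add !subrr derivation0. Qed.

Lemma derivationB x y : D (x - y) = D x - D y.
Proof. by rewrite D_add derivationN. Qed.

Lemma derivationX x k : x * D (x ^+ k) = k%:R * x ^+ k * D x.
Proof.
elim: k => [|k IHk]; first by rewrite expr0 derivation1 mulr0 !mul0r.
by rewrite exprS D_mul mulrDr mulrCA IHk mulrSr; ring.
Qed.

Lemma derivationV x : x != 0 -> D x^-1 = - (D x / x ^+ 2).
Proof.
move=> x0; have := congr1 D (mulfV x0); rewrite D_mul derivation1 => /eqP.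
by rewrite addr_eq0 => /eqP Dx; apply: (mulfI x0); rewrite Dx; field.
Qed.

Definition wronskian (f g : F) := f * D g - D f * g.

Lemma wronskianM f g h k :
  wronskian (f * g) (h * k) = g * k * wronskian f h + f * h * wronskian g k.
Proof. by rewrite /wronskian !D_mul; ring. Qed.

Lemma wronskianNN f g : wronskian (- f) (- g) = wronskian f g.
Proof. by rewrite /wronskian !derivationN; ring. Qed.

Lemma wronskian_id f : wronskian f f = 0.
Proof. by rewrite /wronskian mulrC subrr. Qed.

Lemma wronskianX x a b :
  x * wronskian (x ^+ a) (x ^+ b) = (b%:R - a%:R) * x ^+ a * x ^+ b * D x.
Proof.
transitivity (x ^+ a * (x * D (x ^+ b)) - x * D (x ^+ a) * x ^+ b).
  by rewrite /wronskian; ring.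
by rewrite !derivationX; ring.
Qed.

Section Coordinate.
Variable t : F.
Hypotheses (t_neq0 : t != 0) (Dt : D t = 1).
Let s := t + t^-1.
Let w := t ^+ 2 - 1.
Hypothesis s_neq0 : s != 0.

Lemma w_Ds : w * D s = s ^+ 2 - 4.
Proof. by rewrite /w /s D_add Dt derivationV // Dt; field. Qed.

Lemma wronskian_w_t : wronskian w t = - (s * t).
Proof.
rewrite /wronskian /w derivationB derivation1 subr0 expr2 D_mul Dt /s.
by field.
Qed.

Lemma expz_shift (n : int) : s * t ^ n = t ^ (n + 1) + t ^ (n - 1).
Proof. by rewrite /s !expfzDr // expr1z exprN1; ring. Qed.

Definition uf (n : nat) := - (s ^+ n.-1 * w).
Definition vf (n : nat) := - (s ^+ n * t).

Lemma uf_succ n : (1 <= n)%N -> uf n.+1 = s * uf n.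
Proof. by case: n => // n _; rewrite /uf exprS; ring. Qed.

Lemma vf_succ n : vf n.+1 = s * vf n.
Proof. by rewrite /vf exprS; ring. Qed.

Lemma wronskian_uf n m : (1 <= n)%N -> (1 <= m)%N ->
  wronskian (uf n) (uf m) = (n%:R - m%:R) * (uf (n + m) - 4 * uf (n + m - 2)).
Proof.
case: n => // a _; case: m => // b _; apply: (mulfI s_neq0).
have -> : s * wronskian (uf a.+1) (uf b.+1) =
    (b%:R - a%:R) * s ^+ (a + b) * w * (s ^+ 2 - 4).
  rewrite /uf wronskianNN wronskianM wronskian_id mulr0 addr0 mulrCA wronskianX.
  by rewrite -w_Ds exprD; ring.
rewrite /uf addSn addnS subn2 /=.
case hk: (a + b)%N => [|k].
  by move/eqP: hk; rewrite addn_eq0 => /andP [/eqP -> /eqP ->]; ring.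
by rewrite !exprS; ring.
Qed.

Lemma wronskian_uf_vf n m : (1 <= n)%N ->
  wronskian (uf n) (vf m) =
  (n%:R - m%:R) * vf (n + m) - 4 * (n%:R - m%:R - 1) * vf (n + m - 2).
Proof.
case: n => // a _; apply: (mulfI s_neq0).
have -> : s * wronskian (uf a.+1) (vf m) =
    s ^+ a * s ^+ m * t * ((m%:R - a%:R - 1) * s ^+ 2 - 4 * (m%:R - a%:R)).
  rewrite /uf /vf wronskianNN wronskianM wronskian_w_t mulrDr mulrCA wronskianX.
  have -> : w * t * ((m%:R - a%:R) * s ^+ a * s ^+ m * D s) =
      (m%:R - a%:R) * s ^+ a * s ^+ m * t * (w * D s) by ring.
  by rewrite w_Ds; ring.
rewrite /vf -exprD addSn /=.
case hk: (a + m)%N => [|k].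
  by move/eqP: hk; rewrite addn_eq0 => /andP [/eqP -> /eqP ->]; ring.
by rewrite subn2 /= !exprS; ring.
Qed.

End Coordinate.

Section AlgebraicOverConstants.
Variables (K : fieldType) (iota : {rmorphism K -> F}).
Hypothesis D_const : forall c, D (iota c) = 0.

Lemma derivation_horner p x :
  D (map_poly iota p).[x] = (map_poly iota p^`()).[x] * D x.
Proof.
elim/poly_ind: p => [|p c IHp].
  by rewrite deriv0 !(rmorph0, horner0) derivation0 mul0r.
rewrite derivMXaddC !(rmorphD, rmorphM) /= map_polyX map_polyC /= !hornerE.
by rewrite D_add D_const D_mul IHp; ring.
Qed.

Hypothesis K_char0 : [pchar K] =i pred0.

Lemma derivation_root_eq0 p x : p != 0 -> (map_poly iota p).[x] = 0 -> D x = 0.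
Proof.
have [n] := ubnP (size p); elim: n p => // n IHn p /ltnSE p_le p0 px0.
apply/eqP; apply: contraT => Dx0.
have p'x0 : (map_poly iota p^`()).[x] = 0.
  apply/eqP; move: (derivation_horner p x).
  by rewrite px0 derivation0 => /esym/eqP; rewrite mulf_eq0 (negPf Dx0) orbF.
have [p'0|p'0] := eqVneq p^`() 0.
  move: px0 p0; rewrite (deriv_eq0_pchar0 K_char0 p'0) map_polyC hornerC => /eqP.
  by rewrite fmorph_eq0 polyC_eq0 => ->.
by rewrite (IHn _ (leq_trans (lt_size_deriv p0) p_le) p'0 p'x0) eqxx in Dx0.
Qed.

End AlgebraicOverConstants.

End Derivation.

Section QuotientRule.
Variable F : fieldType.

Definition quotient_rule (n d n' d' : F) := (n' * d - n * d') / d ^+ 2.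

Lemma quotient_rule_invariant (p q n d p' q' n' d' : F) :
  q != 0 -> d != 0 -> p * d = n * q -> p' * d + p * d' = n' * q + n * q' ->
  quotient_rule n d n' d' = quotient_rule p q p' q'.
Proof.
move=> q0 d0 e e'; rewrite /quotient_rule.
have -> : n = p * d / q by rewrite e mulfK.
have -> : n' = (p' * d + p * d' - p * d / q * q') / q by rewrite e' e mulfK // addrK mulfK.
by field; rewrite q0 d0.
Qed.

Lemma quotient_ruleD (a b c d a' b' c' d' : F) : b != 0 -> d != 0 ->
  quotient_rule (a * d + c * b) (b * d)
    (a' * d + a * d' + (c' * b + c * b')) (b' * d + b * d') =
  quotient_rule a b a' b' + quotient_rule c d c' d'.
Proof. by move=> b0 d0; rewrite /quotient_rule; field; rewrite b0 d0. Qed.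

Lemma quotient_ruleM (a b c d a' b' c' d' : F) : b != 0 -> d != 0 ->
  quotient_rule (a * c) (b * d) (a' * c + a * c') (b' * d + b * d') =
  a / b * quotient_rule c d c' d' + quotient_rule a b a' b' * (c / d).
Proof. by move=> b0 d0; rewrite /quotient_rule; field; rewrite b0 d0. Qed.

End QuotientRule.

(** * The derivative on k(t) *)

Section FractionDerivative.
Local Open Scope quotient_scope.
Variable K : fieldType.
Local Notation tofrac := (@FracField.tofrac {poly K}).
Local Notation "x %:F" := (tofrac x).

Lemma fracE (x : Fr K) : x = (\n_(repr x))%:F / (\d_(repr x))%:F.
Proof.
have d0 := denom_ratioP (repr x).
have embed (p : {poly K}) : p%:F = \pi_(Fr K) (Ratio p 1).
  by rewrite /FracField.tofrac; unlock.
apply: (canRL (mulfK _)); first by rewrite tofrac_eq0.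
rewrite !embed -[x in x * _]reprK.
set r := repr x.
have -> : \pi_(Fr K) r * \pi_(Fr K) (Ratio \d_r 1) =
    \pi_(Fr K) (FracField.mulf r (Ratio \d_r 1)) by rewrite FracField.pi_mul.
apply/eqP; rewrite eqmodE /= FracField.equivfE /FracField.mulf /=.
by rewrite !numden_Ratio ?mulr1 ?oner_neq0 ?mulf_neq0 // mulrC.
Qed.

Lemma fderivE (p q : {poly K}) : q != 0 ->
  fderiv (p%:F / q%:F) = quotient_rule p%:F q%:F p^`()%:F q^`()%:F.
Proof.
move=> q0; rewrite /fderiv; set r := repr _.
have qF : q%:F != 0 by rewrite tofrac_eq0.
have dF : (\d_r)%:F != 0 by rewrite tofrac_eq0 denom_ratioP.
have cross : p * \d_r = \n_r * q.
  apply/eqP; rewrite -tofrac_eq !tofracM; apply/eqP.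
  by rewrite -(divfK qF p%:F) (fracE (p%:F / q%:F)) -/r mulrAC divfK.
have cross' : p^`() * \d_r + p * (\d_r)^`() = (\n_r)^`() * q + \n_r * q^`().
  by rewrite -!derivM cross.
move: cross cross' => /(congr1 tofrac) + /(congr1 tofrac).
rewrite tofracXn !(tofracB, tofracD, tofracM) => cross cross'.
exact: quotient_rule_invariant qF dF cross cross'.
Qed.

Lemma fracP (x : Fr K) : exists p q : {poly K}, q != 0 /\ x = p%:F / q%:F.
Proof. by exists \n_(repr x), \d_(repr x); split; [exact: denom_ratioP | exact: fracE]. Qed.

Lemma fderivD (x y : Fr K) : fderiv (x + y) = fderiv x + fderiv y :> Fr K.
Proof.
have [a [b [b0 ->]]] := fracP x; have [c [d [d0 ->]]] := fracP y.
have bF : b%:F != 0 by rewrite tofrac_eq0.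
have dF : d%:F != 0 by rewrite tofrac_eq0.
rewrite (addf_div _ _ bF dF) -!tofracM -tofracD.
rewrite (fderivE _ (mulf_neq0 b0 d0)) (fderivE _ b0) (fderivE _ d0) derivD !derivM.
rewrite !(tofracD, tofracM); exact: (quotient_ruleD _ _ _ _ _ _ bF dF).
Qed.

Lemma fderivM (x y : Fr K) : fderiv (x * y) = x * fderiv y + fderiv x * y :> Fr K.
Proof.
have [a [b [b0 ->]]] := fracP x; have [c [d [d0 ->]]] := fracP y.
have bF : b%:F != 0 by rewrite tofrac_eq0.
have dF : d%:F != 0 by rewrite tofrac_eq0.
rewrite mulf_div -!tofracM.
rewrite (fderivE _ (mulf_neq0 b0 d0)) (fderivE _ b0) (fderivE _ d0) !derivM.
rewrite !(tofracD, tofracM); exact: (quotient_ruleM _ _ _ _ _ _ bF dF).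
Qed.

Lemma fderiv_tofrac p : fderiv p%:F = p^`()%:F.
Proof.
have d1 : (1 : {poly K})^`() = 0 by rewrite -polyC1 derivC.
rewrite -[X in fderiv X]divr1 -tofrac1 (fderivE _ (oner_neq0 _)) /quotient_rule.
by rewrite d1 tofrac0 tofrac1 mulr0 subr0 mulr1 expr1n divr1.
Qed.

Lemma fderiv_t : fderiv (tt_ K) = 1.
Proof. by rewrite fderiv_tofrac derivX tofrac1. Qed.

Lemma fderiv_cst c : fderiv (cst c) = 0 :> Fr K.
Proof. by rewrite fderiv_tofrac derivC tofrac0. Qed.

End FractionDerivative.

(** * Linear spans in W |x I(0,-1) *)

(* With these instances [vadd], [vscale c] and [vzero] are convertible to
   [+], [cst c *:] and [0]. *)
HB.instance Definition _ (K : fieldType) :=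
  GRing.Lmodule.copy (V K) ((Fr K)^o * (Fr K)^o)%type.
HB.instance Definition _ (K : fieldType) :=
  GRing.RMorphism.copy (@cst K) (@FracField.tofrac {poly K} \o polyC).

Lemma scale_pairE (K : fieldType) (a : Fr K) (x : V K) : a *: x = (a * x.1, a * x.2).
Proof. by []. Qed.

Lemma add_pairE (K : fieldType) (x y : V K) : x + y = (x.1 + y.1, x.2 + y.2).
Proof. by []. Qed.

Lemma vsubE (K : fieldType) (x y : V K) : vsub x y = x - y.
Proof. by rewrite /vsub -[vadd _ _]/(x + cst (-1) *: y) rmorphN1 scaleN1r. Qed.

Lemma lincombE (K : fieldType) (I : Type) (G : I -> V K) c s :
  lincomb G c s = \sum_(i <- s) cst (c i) *: G i.
Proof. by elim: s => [|i s IHs]; rewrite ?big_nil ?big_cons -?IHs. Qed.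

Lemma lincomb_fst (K : fieldType) (I : Type) (G : I -> V K) c s :
  (lincomb G c s).1 = \sum_(i <- s) cst (c i) * (G i).1.
Proof. by elim: s => [|i s IHs]; rewrite ?big_nil ?big_cons //= IHs. Qed.

Lemma lincomb_snd (K : fieldType) (I : Type) (G : I -> V K) c s :
  (lincomb G c s).2 = \sum_(i <- s) cst (c i) * (G i).2.
Proof. by elim: s => [|i s IHs]; rewrite ?big_nil ?big_cons //= IHs. Qed.

Section LinearSpan.
Variables (K : fieldType) (I : eqType) (G : I -> V K) (P : I -> Prop).

Lemma in_span_pairs (l : seq (I * K)) :
  (forall p, p \in l -> P p.1) -> in_span G P (\sum_(p <- l) cst p.2 *: G p.1).
Proof.
move=> lP; exists (undup (map fst l)), (fun i => \sum_(p <- l | p.1 == i) p.2); split.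
  by move=> i; rewrite mem_undup => /mapP [p pl ->]; apply: lP.
rewrite lincombE; symmetry; under eq_bigr => i _ do rewrite rmorph_sum scaler_suml.
rewrite (exchange_big_dep xpredT) //=; apply: eq_big_seq => p pl.
rewrite (eq_bigl (pred1 p.1)) => [|i]; last by rewrite /= eq_sym.
by rewrite -big_filter filter_pred1_uniq ?undup_uniq ?mem_undup ?map_f ?big_seq1.
Qed.

Lemma in_span0 : in_span G P 0.
Proof. by exists [::], (fun=> 0). Qed.

Lemma in_span_gen i : P i -> in_span G P (G i).
Proof.
move=> Pi; have := @in_span_pairs [:: (i, 1)]; rewrite big_seq1 rmorph1 scale1r.
by apply=> p; rewrite inE => /eqP ->.
Qed.

Lemma in_spanD x y : in_span G P x -> in_span G P y -> in_span G P (x + y).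
Proof.
move=> [s [c [sP ->]]] [s' [c' [s'P ->]]]; rewrite !lincombE.
have := @in_span_pairs ([seq (i, c i) | i <- s] ++ [seq (i, c' i) | i <- s']).
rewrite big_cat !big_map; apply=> p; rewrite mem_cat.
by case/orP => /mapP [i ? ->]; [exact: sP | exact: s'P].
Qed.

Lemma in_spanZ a x : in_span G P x -> in_span G P (cst a *: x).
Proof.
move=> [s [c [sP ->]]]; exists s, (fun i => a * c i); split => //.
by rewrite !lincombE scaler_sumr; apply: eq_bigr => i _; rewrite rmorphM scalerA.
Qed.

Lemma in_spanN x : in_span G P x -> in_span G P (- x).
Proof. by move/(in_spanZ (-1)); rewrite rmorphN1 scaleN1r. Qed.

Lemma in_spanB x y : in_span G P x -> in_span G P y -> in_span G P (x - y).
Proof. by move=> xP /in_spanN; apply: in_spanD. Qed.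

Lemma in_span_trans (J : eqType) (H : J -> V K) (Q : J -> Prop) x :
  (forall j, Q j -> in_span G P (H j)) -> in_span H Q x -> in_span G P x.
Proof.
move=> HG [s [c [sQ ->]]]; rewrite lincombE big_seq.
apply: (big_ind (in_span G P)) => [|y z|j /sQ /HG]; first exact: in_span0.
  exact: in_spanD.
exact: in_spanZ.
Qed.

Lemma in_span_scale (a : Fr K) x :
  (forall i, P i -> in_span G P (a *: G i)) -> in_span G P x -> in_span G P (a *: x).
Proof.
move=> aG [s [c [sP ->]]]; apply: (@in_span_trans _ (fun i => a *: G i) P) => //.
exists s, c; split => //; rewrite !lincombE scaler_sumr.
by apply: eq_bigr => i _; rewrite !scalerA mulrC.
Qed.

Lemma in_span_recurrence (a : Fr K) (f : int -> V K) :
  (forall n, a *: f n = f (n + 1) + f (n - 1)) ->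
  (forall i, P i -> in_span G P (a *: G i)) ->
  in_span G P (f 0) -> in_span G P (f 1) -> forall k : nat, in_span G P (f k).
Proof.
move=> f_rec aG f0 f1.
suff fk (k : nat) : in_span G P (f k) /\ in_span G P (f k.+1) by move=> k; case: (fk k).
elim: k => [|k [IHk IHk1]]; first by split.
split => //; have -> : f k.+2 = a *: f k.+1 - f k.
  rewrite f_rec (_ : k.+1%:Z + 1 = k.+2) 1?(_ : k.+1%:Z - 1 = k) ?addrK //; lia.
exact: in_spanB (in_span_scale aG IHk1) IHk.
Qed.

End LinearSpan.

(** * The centreless BCCA *)

Section BCCA.
Variable K : fieldType.
Local Notation t := (tt_ K).
Local Notation s := (tt_ K + (tt_ K)^-1).
Local Notation fderivD := (@fderivD K).
Local Notation fderivM := (@fderivM K).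

Lemma tt_neq0 : t != 0.
Proof. by rewrite /tt_ tofrac_eq0 polyX_eq0. Qed.

Lemma t2_neq1 : t ^+ 2 != 1.
Proof.
rewrite /tt_ -tofracXn -tofrac1 tofrac_eq; apply/eqP => /(congr1 (fun p : {poly K} => size p)).
by rewrite size_polyXn size_poly1.
Qed.

Lemma fderiv_s_neq0 : fderiv s != 0.
Proof.
rewrite fderivD fderiv_t (derivationV fderivM tt_neq0) fderiv_t div1r.
by rewrite subr_eq0 eq_sym invr_eq1 t2_neq1.
Qed.

Lemma s_neq0 : s != 0.
Proof. by apply: contraNneq fderiv_s_neq0 => ->; rewrite (derivation0 fderivD). Qed.

Lemma actr0 f : act f 0 = 0 :> Fr K.
Proof. by rewrite /act (derivation0 fderivD) !mulr0 subrr. Qed.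

Lemma lie_u_u n m : (1 <= n)%N -> (1 <= m)%N ->
  lie (u K n) (u K m) =
  vscale (n%:R - m%:R) (vsub (u K (n + m)) (vscale 4 (u K (n + m - 2)))).
Proof.
move=> n1 m1; rewrite /lie /vscale /vsub /vadd /= !actr0 !mulr0 subrr addr0 mulr0.
rewrite rmorphB !rmorph_nat rmorphN1 mulN1r.
by congr pair; exact: (wronskian_uf fderivD fderivM tt_neq0 (fderiv_t K) s_neq0 n1 m1).
Qed.

Lemma lie_u_v n m : (1 <= n)%N ->
  lie (u K n) (v K m) =
  vsub (vscale (n%:R - m%:R) (v K (n + m)))
       (vscale (4 * (n%:R - m%:R - 1)) (v K (n + m - 2))).
Proof.
move=> n1; rewrite /lie /vscale /vsub /vadd /= !actr0 subr0 !mulr0 addr0.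
rewrite !(rmorphB, rmorphM, rmorph_nat, rmorph1) rmorphN1 mulN1r.
by congr pair; exact: (wronskian_uf_vf fderivD fderivM tt_neq0 (fderiv_t K) s_neq0 m n1).
Qed.

Lemma lie_v_v n m : lie (v K n) (v K m) = vzero K.
Proof. by rewrite /lie /act /= (derivation0 fderivD) !(mul0r, subrr). Qed.

Lemma s_transcendental (K_char0 : [pchar K] =i pred0) (p : {poly K}) :
  (map_poly (@cst K) p).[s] = 0 -> p = 0.
Proof.
move=> ps0; apply/eqP; apply: contraT => p0; move: fderiv_s_neq0.
by rewrite (derivation_root_eq0 fderivD fderivM (@fderiv_cst K) K_char0 p0 ps0) eqxx.
Qed.

Lemma powers_s_indep (K_char0 : [pchar K] =i pred0) (J : eqType) (r : seq J)
    (e : J -> nat) (a : J -> K) :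
  uniq r -> {in r &, injective e} -> \sum_(j <- r) cst (a j) * s ^+ e j = 0 ->
  {in r, forall j, a j = 0}.
Proof.
move=> r_uniq e_inj sum0; apply: sum_scaleXn_eq0 r_uniq e_inj _.
apply: (s_transcendental K_char0); rewrite raddf_sum horner_sum -[RHS]sum0.
by apply: eq_bigr => j _; rewrite /= map_polyZ map_polyXn hornerZ hornerXn.
Qed.

Lemma lin_indep_uv (K_char0 : [pchar K] =i pred0) : lin_indep (@uv K) (@uv_dom).
Proof.
move=> r c r_uniq r_dom r0.
have [fst0 snd0] : (lincomb (uv K) c r).1 = 0 /\ (lincomb (uv K) c r).2 = 0 by rewrite r0.
rewrite lincomb_fst big_lefts_rights [X in _ + X]big1 ?addr0 in fst0; last first.
  by move=> *; rewrite /= mulr0.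
rewrite lincomb_snd big_lefts_rights [X in X + _]big1 ?add0r in snd0; last first.
  by move=> *; rewrite /= mulr0.
case=> n nr.
  have pred_inj : {in lefts r &, injective predn}.
    move=> x y; rewrite !mem_lefts => /r_dom x1 /r_dom y1 exy.
    by rewrite -(prednK x1) -(prednK y1) exy.
  apply: (@powers_s_indep K_char0 _ _ predn (c \o inl) (lefts_uniq r_uniq) pred_inj);
    last by rewrite mem_lefts.
  move: fst0; under eq_bigr do rewrite mulrN mulrA.
  rewrite sumrN -mulr_suml => /eqP.
  by rewrite oppr_eq0 mulf_eq0 subr_eq0 (negPf t2_neq1) orbF => /eqP.
apply: (@powers_s_indep K_char0 _ _ id (c \o inr) (rights_uniq r_uniq)) => //;
  last by rewrite mem_rights.
move: snd0; under eq_bigr do rewrite mulrN mulrA.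
by rewrite sumrN -mulr_suml => /eqP; rewrite oppr_eq0 mulf_eq0 (negPf tt_neq0) orbF => /eqP.
Qed.

Lemma Lw_shift n : s *: Lw K n = Lw K (n + 1) + Lw K (n - 1).
Proof.
by rewrite scale_pairE add_pairE /= mulr0 addr0 mulrN (expz_shift tt_neq0) addrK subrK opprD.
Qed.

Lemma Mi_shift n : s *: Mi K n = Mi K (n + 1) + Mi K (n - 1).
Proof.
by rewrite scale_pairE add_pairE /= mulr0 addr0 mulrN (expz_shift tt_neq0) addrK subrK opprD.
Qed.

Definition Ldiff (n : int) : V K := Lw K n - Lw K (- n).
Definition Msum (n : int) : V K := Mi K n + Mi K (- n).

Lemma bgen_inl k : bgen K (inl k) = Ldiff k.
Proof. exact: vsubE. Qed.

Lemma bgen_inr k : bgen K (inr k) = Msum k.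
Proof. by []. Qed.

Lemma Ldiff_shift n : s *: Ldiff n = Ldiff (n + 1) + Ldiff (n - 1).
Proof.
rewrite /Ldiff scalerBr !Lw_shift opprD (_ : - (n - 1) = - n + 1); last first.
  by rewrite opprB addrC.
by rewrite opprD [- _ - _]addrC addrACA.
Qed.

Lemma Msum_shift n : s *: Msum n = Msum (n + 1) + Msum (n - 1).
Proof.
rewrite /Msum scalerDr !Mi_shift opprD (_ : - (n - 1) = - n + 1); last first.
  by rewrite opprB addrC.
by rewrite [Mi K (- n + 1) + _]addrC addrACA.
Qed.

Lemma Ldiff0 : Ldiff 0 = 0.
Proof. by rewrite /Ldiff oppr0 subrr. Qed.

Lemma LdiffN n : Ldiff (- n) = - Ldiff n.
Proof. by rewrite /Ldiff opprK opprB. Qed.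

Lemma MsumN n : Msum (- n) = Msum n.
Proof. by rewrite /Msum opprK addrC. Qed.

Lemma Ldiff_in_b n : in_span (bgen K) bgen_dom (Ldiff n).
Proof.
case: n => [[|k]|k]; first by rewrite Ldiff0; apply: in_span0.
  by rewrite -bgen_inl; apply: in_span_gen.
by rewrite NegzE LdiffN -bgen_inl; apply/in_spanN/in_span_gen.
Qed.

Lemma Msum_in_b n : in_span (bgen K) bgen_dom (Msum n).
Proof. by case: n => k; rewrite ?NegzE ?MsumN -bgen_inr; apply: in_span_gen. Qed.

Lemma s_bgen_in_b i : bgen_dom i -> in_span (bgen K) bgen_dom (s *: bgen K i).
Proof.
case: i => k _; first by rewrite bgen_inl Ldiff_shift; apply: in_spanD; apply: Ldiff_in_b.
by rewrite bgen_inr Msum_shift; apply: in_spanD; apply: Msum_in_b.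
Qed.

Lemma u_succ n : (1 <= n)%N -> u K n.+1 = s *: u K n.
Proof. by move=> n1; rewrite scale_pairE /= mulr0; congr pair; apply: uf_succ. Qed.

Lemma v_succ n : v K n.+1 = s *: v K n.
Proof. by rewrite scale_pairE /= mulr0; congr pair; apply: vf_succ. Qed.

Lemma s_uv_in_span i : uv_dom i -> in_span (uv K) uv_dom (s *: uv K i).
Proof.
case: i => [n n1|n _] /=.
  by rewrite -u_succ //; apply: (@in_span_gen _ _ _ _ (inl n.+1)).
by rewrite -v_succ; apply: (@in_span_gen _ _ _ _ (inr n.+1)).
Qed.

Lemma u1E : u K 1 = Ldiff 1.
Proof.
rewrite /Ldiff /Lw /u add_pairE /= -[t ^ (1 + 1)]/(t ^+ 2) -[t ^ (-1 + 1)]/1.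
by rewrite expr0 mul1r opprB opprK addrC subr0.
Qed.

Lemma v0E : v K 0 = Mi K 0.
Proof. by rewrite /v /Mi expr0 mul1r. Qed.

Lemma bgen_in_span_uv i : bgen_dom i -> in_span (uv K) uv_dom (bgen K i).
Proof.
case: i => k _; [rewrite bgen_inl | rewrite bgen_inr].
  apply: (in_span_recurrence Ldiff_shift s_uv_in_span).
    by rewrite Ldiff0; apply: in_span0.
  by rewrite -u1E; apply: (@in_span_gen _ _ _ _ (inl 1)).
apply: (in_span_recurrence Msum_shift s_uv_in_span).
  by rewrite /Msum oppr0 -v0E; apply: in_spanD; apply: (@in_span_gen _ _ _ _ (inr 0)).
by rewrite /Msum -[Mi K 1 + _](Mi_shift 0) -v0E; apply: (@s_uv_in_span (inr 0)).
Qed.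

Lemma uv_in_b (K_char0 : [pchar K] =i pred0) i :
  uv_dom i -> in_span (bgen K) bgen_dom (uv K i).
Proof.
case: i => [[|n] //|n] /= _.
  elim: n => [|n IHn]; first by rewrite u1E; apply: Ldiff_in_b.
  by rewrite u_succ //; apply: in_span_scale s_bgen_in_b IHn.
elim: n => [|n IHn]; last by rewrite v_succ; apply: in_span_scale s_bgen_in_b IHn.
have half2 : 2^-1 + 2^-1 = 1 :> K.
  by field; rewrite ((pcharf0P K).1 K_char0 2).
have -> : v K 0 = cst 2^-1 *: Msum 0.
  by rewrite /Msum oppr0 -v0E scalerDr -scalerDl -rmorphD half2 rmorph1 scale1r.
exact/in_spanZ/Msum_in_b.
Qed.

End BCCA.

Theorem corollary4p34 (K : fieldType) (hchar : [pchar K] =i pred0) :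
  (* b = span{u_n, v_m | n >= 1, m >= 0} *)
  (forall x : V K, in_b x <-> in_span (@uv K) (@uv_dom) x) /\
  (* and these elements form a basis (linear independence) *)
  lin_indep (@uv K) (@uv_dom) /\
  (forall n m : nat, (1 <= n)%N -> (1 <= m)%N ->
     lie (u K n) (u K m) =
     vscale (n%:R - m%:R) (vsub (u K (n + m)) (vscale 4 (u K (n + m - 2))))) /\
  (forall n m : nat, (1 <= n)%N ->
     lie (u K n) (v K m) =
     vsub (vscale (n%:R - m%:R) (v K (n + m)))
          (vscale (4 * (n%:R - m%:R - 1)) (v K (n + m - 2)))) /\
  (forall n m : nat, lie (v K n) (v K m) = vzero K).
Proof.
split.
  move=> x; split; apply: in_span_trans; [exact: bgen_in_span_uv | exact: uv_in_b].
split; first exact: lin_indep_uv.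
split; first exact: lie_u_u.
split; first exact: lie_u_v.
exact: lie_v_v.
Qed.
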